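(* If $R$ is a finite commutative ring, then the set of all free cyclic submodules of $R^2$ equals the projective line $\mathbb{P}(R)$.
   Context: $R^2$ is the free $R$-module of pairs; $R(a,b)=\{(\alpha a,\alpha b):\alpha\in R\}$ is free if $r(a,b)=(0,0)$ implies $r=0$. A pair $(a,b)$ is admissible if there exist $c,d\in R$ with $\begin{pmatrix}a&b\\c&d\end{pmatrix}\in GL_2(R)$. The projective line is $\mathbb{P}(R)=\{R(a,b): (a,b)\in R^2 \text{ admissible}\}$, equivalently the orbit of $R(1,0)$ under the right action of $GL_2(R)$. *)

From HB Require Import structures.
From mathcomp Require Import all_boot all_order all_algebra.
Set Implicit Arguments. Unset Strict Implicit. Unset Printing Implicit Defensive.
Import GRing.Theory.
Local Open Scope ring_scope.

Definition mx2 (R : comUnitRingType) (a b c d : R) : 'M[R]_2 :=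
  \matrix_(i < 2, j < 2)
    if i == 0 :> nat then (if j == 0 :> nat then a else b)
    else (if j == 0 :> nat then c else d).

Definition cyc (R : finComUnitRingType) (a b : R) : {set R * R} :=
  [set (r * a, r * b) | r : R].

Definition free_gen (R : comUnitRingType) (a b : R) : Prop :=
  forall r : R, (r * a, r * b) = (0, 0) -> r = 0.

Definition admissible (R : comUnitRingType) (a b : R) : Prop :=
  exists c d : R, mx2 a b c d \in unitmx.

(* A pair (a, b) is admissible exactly when it is unimodular (x a + y b = 1),
   and a unimodular pair generates a free cyclic submodule in any commutative
   ring.  Conversely, in a finite ring some power a^N of a is idempotent; with
   e := a^N and f := (b (1 - e))^M idempotent as well, z := (1 - e)(1 - f)
   kills a^N and b^M.  If z were nonzero, multiplying it by suitable powers of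
   a and b would give a nonzero element killing both a and b, contradicting
   freeness; so z = 0, i.e. e + f = 1, which is a unimodularity relation. *)
From HB Require Import structures.
From mathcomp Require Import all_boot all_order all_algebra.
From mathcomp Require Import ring.
Set Implicit Arguments.
Unset Strict Implicit.
Unset Printing Implicit Defensive.

Import GRing.Theory.
Local Open Scope ring_scope.

Lemma det_mx2 (R : comUnitRingType) (a b c d : R) :
  \det (mx2 a b c d) = a * d - b * c.
Proof.
rewrite (expand_det_row _ 0) !big_ord_recl big_ord0 /cofactor /=.
by rewrite !det_mx11 !mxE /= expr0 expr1 !mul1r mulN1r addr0 mulrN.
Qed.

Definition unimodular (R : comPzRingType) (a b : R) : Prop :=
  exists x y : R, x * a + y * b = 1.

Lemma admissibleP (R : comUnitRingType) (a b : R) :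
  admissible a b <-> unimodular a b.
Proof.
split=> [[c [d]] | [x [y xy1]]].
  rewrite unitmxE det_mx2 => /unitrP[u [u_det _]].
  exists (u * d), (- (u * c)).
  by rewrite -u_det; ring.
exists (- y), x.
by rewrite unitmxE det_mx2 mulrN opprK (mulrC a) (mulrC b) xy1 unitr1.
Qed.

Lemma unimodular_free_gen (R : comUnitRingType) (a b : R) :
  unimodular a b -> free_gen a b.
Proof.
move=> [x [y xy1]] r [ra rb].
by rewrite -[r]mulr1 -xy1 mulrDr (mulrCA r x) (mulrCA r y) ra rb !mulr0 addr0.
Qed.

Lemma expr_eventually_periodic (R : finPzRingType) (x : R) :
  exists i d, (0 < d)%N /\ forall k m, (i <= m)%N -> x ^+ (m + k * d) = x ^+ m.
Proof.
have : ~~ injectiveb (fun k : 'I_#|R|.+1 => x ^+ k).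
  by apply/injectiveP => /leq_card; rewrite card_ord ltnn.
move=> /injectivePn[i [j neq_ij eq_ij]].
wlog lt_ij : i j neq_ij eq_ij / (i < j)%N.
  move=> IH; case: (ltngtP i j) => [|lt_ji|/val_inj eq_ij']; first exact: IH.
    by apply: (IH j i); rewrite // eq_sym.
  by rewrite eq_ij' eqxx in neq_ij.
exists i, (j - i)%N; split=> [|k m le_im]; first by rewrite subn_gt0.
have period_i : x ^+ (i + k * (j - i)) = x ^+ i.
  elim: k => [|k IH]; first by rewrite mul0n addn0.
  by rewrite mulSn addnA subnKC 1?ltnW // exprD -eq_ij -exprD IH.
by rewrite -(subnK le_im) -addnA exprD period_i -exprD.
Qed.

Lemma expr_idempotent (R : finPzRingType) (x : R) :
  exists2 N, (0 < N)%N & x ^+ N * x ^+ N = x ^+ N.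
Proof.
have [i [d [d_gt0 periodic]]] := expr_eventually_periodic x.
exists (i.+1 * d)%N; first by rewrite muln_gt0.
by rewrite -exprD periodic // (leq_trans (leqnSn i)) // leq_pmulr.
Qed.

Lemma idempotent_expr (R : pzRingType) (e : R) (n : nat) :
  (0 < n)%N -> e * e = e -> e ^+ n = e.
Proof.
case: n => // n _ idem_e; elim: n => [|n IH]; first by rewrite expr1.
by rewrite exprS IH idem_e.
Qed.

Lemma annihilator_of_expr (R : pzRingType) (r x : R) (p : nat) :
  r != 0 -> r * x ^+ p = 0 -> exists2 i, r * x ^+ i != 0 & r * x ^+ i * x = 0.
Proof.
move=> r_neq0; elim: p => [|p IH] rxp0.
  by rewrite expr0 mulr1 in rxp0; rewrite rxp0 eqxx in r_neq0.
have [rxp_eq0 | rxp_neq0] := eqVneq (r * x ^+ p) 0; first exact: IH.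
by exists p; rewrite // -mulrA -exprSr.
Qed.

Lemma common_annihilator (R : comPzRingType) (z a b : R) (N M : nat) :
  z != 0 -> z * a ^+ N = 0 -> z * b ^+ M = 0 ->
  exists2 w, w != 0 & w * a = 0 /\ w * b = 0.
Proof.
move=> z_neq0 zaN zbM.
have [i zai_neq0 zai_a] := annihilator_of_expr z_neq0 zaN.
have zai_bM : z * a ^+ i * b ^+ M = 0 by rewrite mulrAC zbM mul0r.
have [j w_neq0 w_b] := annihilator_of_expr zai_neq0 zai_bM.
by exists (z * a ^+ i * b ^+ j); rewrite // mulrAC zai_a mul0r.
Qed.

Lemma fin_free_gen_unimodular (R : finComUnitRingType) (a b : R) :
  free_gen a b -> unimodular a b.
Proof.
move=> free_ab.
have [N N_gt0 idem_e] := expr_idempotent a; set e := a ^+ N in idem_e.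
have [M M_gt0 idem_f] := expr_idempotent (b * (1 - e)); set f := _ ^+ M in idem_f.
have idem_1e : (1 - e) * (1 - e) = 1 - e.
  by rewrite mulrBr mulr1 mulrBl mul1r idem_e subrr subr0.
have fE : f = b ^+ M * (1 - e) by rewrite /f exprMn (idempotent_expr M_gt0 idem_1e).
have ef0 : e * f = 0 by rewrite fE mulrCA mulrBr mulr1 idem_e subrr mulr0.
have z0 : (1 - e) * (1 - f) = 0.
  apply/eqP; apply: contraT => z_neq0.
  have zaN : (1 - e) * (1 - f) * a ^+ N = 0.
    by rewrite mulrAC mulrBl mul1r idem_e subrr mul0r.
  have zbM : (1 - e) * (1 - f) * b ^+ M = 0.
    by rewrite mulrAC (mulrC (1 - e)) -fE mulrBr mulr1 idem_f subrr.
  have [w w_neq0 [wa wb]] := common_annihilator z_neq0 zaN zbM.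
  by rewrite (free_ab w) ?eqxx // in w_neq0; rewrite wa wb.
exists (a ^+ N.-1), (b ^+ M.-1 * (1 - e)).
rewrite -exprSr prednK // mulrAC -exprSr prednK // -fE -/e.
move/eqP: z0; rewrite mulrBl mul1r mulrBr mulr1 ef0 subr0 subr_eq0 => /eqP <-.
by rewrite subrK.
Qed.

Theorem mainTheorem14 (R : finComUnitRingType) (S : {set R * R}) :
  (exists a b : R, free_gen a b /\ S = cyc a b) <->
  (exists a b : R, admissible a b /\ S = cyc a b).
Proof.
split=> [[a [b [free_ab ->]]] | [a [b [adm_ab ->]]]]; exists a, b; split=> //.
  exact/admissibleP/fin_free_gen_unimodular.
exact/unimodular_free_gen/admissibleP.
Qed.
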